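(* Let $G$, $k\ge 3$, the choice strings $c_{i,j}$ ($1\le i<j\le k$), the $\binom{k}{2}-(k-1)$ template strings, $L$ and $d$ be as in the Consensus Patterns construction in the context. If $G$ has a clique of size $k$, then the constructed Consensus Patterns instance has a solution: there is a string $s\in\{0,1\}^L$ and, for each choice string and each template string, a substring of it of length $L$, such that the sum over all these strings of the Hamming distances between $s$ and the chosen substrings is at most $d$.
   Context: Let $G=(V,E)$ be an undirected simple graph with $V=\{v_1,\dots,v_n\}$ and edge set $E=\{e_1,\dots,e_m\}$, and let $k\ge 3$ be an integer. All strings are over $\{0,1\}$. For $1\le p\le n$ let $\mathrm{number}(p)=0^{p-1}10^{n-p}$. Let $\mathrm{front\_tag}=(1^{nk^3}0)^{nk^3}0^{nk^3}$ (length $n^2k^6+2nk^3$). For $1\le i<j\le k$ and an edge $e$ joining $v_r,v_s$ with $r<s$ let $\mathrm{encode}(i,j,e)=(0^n)^{i-1}\,\mathrm{number}(r)\,(0^n)^{j-i-1}\,\mathrm{number}(s)\,(0^n)^{k-j}$ and $\mathrm{block}(i,j,e)=\mathrm{front\_tag}\,\mathrm{encode}(i,j,e)$. The choice string is $c_{i,j}=\mathrm{block}(i,j,e_1)\cdots\mathrm{block}(i,j,e_m)$. There are $\binom{k}{2}-(k-1)$ template strings, each equal to $\mathrm{front\_tag}\,1^{nk}$. Set $L=n^2k^6+2nk^3+nk$ and $d=(\binom{k}{2}-(k-1))nk$. The Consensus Patterns instance consists of all choice strings and all template strings with these $L$ and $d$. Consensus Patterns asks for a string $s$ of length $L$ and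 a length-$L$ substring of each input string such that the sum of Hamming distances from $s$ to these substrings is at most $d$. *)

From mathcomp Require Import all_boot.
Set Implicit Arguments. Unset Strict Implicit. Unset Printing Implicit Defensive.

(* Binary strings are [seq bool] (true = 1, false = 0). *)

Definition front_tag (n k : nat) : seq bool :=
  let N := n * k ^ 3 in
  flatten (nseq N (nseq N true ++ [:: false])) ++ nseq N false.

(* number(p) = 0^{p-1} 1 0^{n-p}, for 1 <= p <= n *)
Definition number (n p : nat) : seq bool :=
  nseq p.-1 false ++ true :: nseq (n - p) false.

Definition zblock (n c : nat) : seq bool := flatten (nseq c (nseq n false)).

(* encode(i,j,e) for e = {v_r, v_s}, r < s (1-based indices) *)
Definition encode (n k i j r s : nat) : seq bool :=
  zblock n i.-1 ++ number n r ++ zblock n (j - i - 1) ++ number n s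
    ++ zblock n (k - j).

(* Vertices are 'I_n; vertex v : 'I_n is v_{v+1}. *)
Definition block (n k i j : nat) (e : 'I_n * 'I_n) : seq bool :=
  front_tag n k ++ encode n k i j (val e.1).+1 (val e.2).+1.

Definition choice_string (n k i j : nat) (E : seq ('I_n * 'I_n)) : seq bool :=
  flatten [seq block k i j e | e <- E].

Definition template_string (n k : nat) : seq bool :=
  front_tag n k ++ nseq (n * k) true.

Definition CP_L (n k : nat) : nat := n ^ 2 * k ^ 6 + 2 * n * k ^ 3 + n * k.
Definition CP_d (n k : nat) : nat := ('C(k, 2) - (k - 1)) * n * k.

(* all pairs 1 <= i < j <= k *)
Definition choice_pairs (k : nat) : seq (nat * nat) :=
  [seq (i, j) | i <- iota 1 k, j <- iota i.+1 (k - i)].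

Definition CP_instance (n k : nat) (E : seq ('I_n * 'I_n)) : seq (seq bool) :=
  [seq choice_string k p.1 p.2 E | p <- choice_pairs k]
    ++ nseq ('C(k, 2) - (k - 1)) (template_string n k).

Definition hamming (s t : seq bool) : nat :=
  count id [seq p.1 != p.2 | p <- zip s t].

Definition CP_solvable (inst : seq (seq bool)) (L d : nat) : Prop :=
  exists s : seq bool, size s = L /\
  exists pos : nat -> nat,
    (forall x, x < size inst -> pos x + L <= size (nth [::] inst x)) /\
    \sum_(x < size inst) hamming s (take L (drop (pos x) (nth [::] inst x)))
      <= d.

Definition edge_enum (n : nat) (G : rel 'I_n) (E : seq ('I_n * 'I_n)) : Prop :=
  uniq E /\ forall u v : 'I_n, ((u, v) \in E) = (u < v) && G u v.

Definition has_clique (n : nat) (G : rel 'I_n) (k : nat) : Prop :=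
  exists K : {set 'I_n}, #|K| = k /\ {in K &, forall u v, u != v -> G u v}.

From Pilot Require Import Defs.
From mathcomp Require Import all_boot zify.
Set Implicit Arguments. Unset Strict Implicit. Unset Printing Implicit Defensive.

(* List the clique increasingly as u_1 < ... < u_k and take as consensus the
   front tag followed by number(u_1) ... number(u_k).  In c_{i,j} choose the
   block of the edge u_i u_j: it agrees with the consensus except in the k - 2
   number slots other than i and j, which are zero there, so it costs k - 2.
   A template string is matched in full and costs nk - k.  As
   2 C(k,2) = k(k-1), the total C(k,2)(k-2) + (C(k,2)-(k-1))(nk-k) is exactly d. *)

Lemma hamming_cat s1 s2 t1 t2 : size s1 = size t1 ->
  hamming (s1 ++ s2) (t1 ++ t2) = hamming s1 t1 + hamming s2 t2.
Proof. by move=> eq_sz; rewrite /hamming zip_cat // map_cat count_cat. Qed.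

Lemma hamming_id s : hamming s s = 0.
Proof. by elim: s => //= b s IHs; rewrite /hamming /= eqxx. Qed.

Lemma hamming_nseq_false s : hamming s (nseq (size s) false) = count id s.
Proof. by elim: s => //= b s IHs; rewrite /hamming /= -/(hamming _ _) IHs; case: b. Qed.

Lemma hamming_nseq_true s : hamming s (nseq (size s) true) = size s - count id s.
Proof.
elim: s => //= b s IHs; rewrite /hamming /= -/(hamming _ _) IHs.
by case: b; rewrite /= ?subSS // add1n subSn // count_size.
Qed.

Lemma size_flatten_uniform T L (bs : seq (seq T)) :
  all (fun b => size b == L) bs -> size (flatten bs) = size bs * L.
Proof. by elim: bs => //= b bs IHbs /andP[/eqP sz_b /IHbs]; rewrite size_cat sz_b => ->. Qed.

Lemma take_drop_flatten_uniform T L (bs : seq (seq T)) m :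
  all (fun b => size b == L) bs -> m < size bs ->
  take L (drop (m * L) (flatten bs)) = nth [::] bs m.
Proof.
elim: bs m => [|b bs IHbs] [|m] //= /andP[/eqP sz_b all_bs] lt_m.
  by rewrite drop0 -sz_b take_size_cat.
by rewrite drop_cat sz_b mulSn ltnNge leq_addr /= addKn IHbs.
Qed.

Definition near_window (s t : seq bool) (c : nat) : bool :=
  (size s <= size t) &&
  has (fun p => hamming s (take (size s) (drop p t)) <= c) (iota 0 (size t - size s).+1).

Lemma near_window_at s t c p : p + size s <= size t ->
  hamming s (take (size s) (drop p t)) <= c -> near_window s t c.
Proof.
move=> fit near; have le_st := leq_trans (leq_addl p _) fit.
rewrite /near_window le_st; apply/hasP; exists p => //.
by rewrite mem_iota ltnS leq_subRL // addnC.
Qed.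

Lemma near_window_flatten s (bs : seq (seq bool)) b c :
  all (fun b => size b == size s) bs -> b \in bs -> hamming s b <= c ->
  near_window s (flatten bs) c.
Proof.
move=> uniform b_in near; have lt_b := b_in; rewrite -index_mem in lt_b.
apply: (@near_window_at _ _ _ (index b bs * size s)).
  by rewrite (size_flatten_uniform uniform) -mulSnr leq_mul2r lt_b orbT.
by rewrite take_drop_flatten_uniform // nth_index.
Qed.

Lemma CP_solvable_near s d (tc : seq (seq bool * nat)) :
  all (fun tc => near_window s tc.1 tc.2) tc -> sumn (map snd tc) <= d ->
  CP_solvable (map fst tc) (size s) d.
Proof.
move=> /allP near_tc cost_d; exists s; split=> //.
pose fit (t : seq bool) (c p : nat) := hamming s (take (size s) (drop p t)) <= c.
pose pos x := let: (t, c) := nth ([::], 0) tc x in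
  find (fit t c) (iota 0 (size t - size s).+1).
have posP x : x < size tc -> let: (t, c) := nth ([::], 0) tc x in
    pos x + size s <= size t /\ fit t c (pos x).
  move=> lt_x; rewrite /pos; case: (nth _ _ _) (near_tc _ (mem_nth ([::], 0) lt_x)) => t c.
  case/andP=> le_st has_fit.
  have lt_find : find (fit t c) (iota 0 (size t - size s).+1) < (size t - size s).+1.
    by rewrite -[X in _ < X](size_iota 0) -has_find.
  have := nth_find 0 has_fit; rewrite nth_iota // add0n => fit_find; split=> //.
  by move: lt_find; rewrite ltnS leq_subRL // addnC.
exists pos; split.
  move=> x; rewrite size_map => lt_x; rewrite (nth_map ([::], 0)) //.
  by have := posP x lt_x; case: (nth _ _ _) => t c [].
apply: leq_trans cost_d; rewrite size_map sumnE big_map (big_nth ([::], 0)) big_mkord.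
apply: leq_sum => x _; rewrite (nth_map ([::], 0)) //.
by have := posP x (ltn_ord x); case: (nth _ _ _) => t c [].
Qed.

Lemma size_front_tag n k :
  size (front_tag n k) = n * k ^ 3 * (n * k ^ 3) + 2 * (n * k ^ 3).
Proof.
rewrite /front_tag size_cat size_flatten size_nseq /shape map_nseq sumn_nseq.
by rewrite size_cat !size_nseq mulnDl mul1n; lia.
Qed.

Lemma zblockE n c : zblock n c = nseq (c * n) false.
Proof. by elim: c => //= c IHc; rewrite /zblock /= -/(zblock n c) IHc mulSn nseqD. Qed.

Lemma size_number n p : 0 < p <= n -> size (Defs.number n p) = n.
Proof. by move=> /andP[p_gt0 le_pn]; rewrite size_cat /= !size_nseq; lia. Qed.

Lemma count_number n p : count id (Defs.number n p) = 1.
Proof. by rewrite count_cat /= !count_nseq !mul0n. Qed.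

Definition vertex_code n (u : seq 'I_n) : seq bool :=
  flatten [seq Defs.number n (val x).+1 | x <- u].

Lemma vertex_code_cons n (x : 'I_n) u :
  vertex_code (x :: u) = Defs.number n (val x).+1 ++ vertex_code u.
Proof. by []. Qed.

Lemma vertex_code_cat n (u v : seq 'I_n) :
  vertex_code (u ++ v) = vertex_code u ++ vertex_code v.
Proof. by rewrite /vertex_code map_cat flatten_cat. Qed.

Lemma size_vertex_code n (u : seq 'I_n) : size (vertex_code u) = size u * n.
Proof.
elim: u => //= x u IHu; rewrite vertex_code_cons size_cat IHu size_number //.
by rewrite ltn_ord.
Qed.

Lemma count_vertex_code n (u : seq 'I_n) : count id (vertex_code u) = size u.
Proof. by elim: u => //= x u IHu; rewrite vertex_code_cons count_cat IHu count_number. Qed.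

Lemma hamming_vertex_code_zblock n (u : seq 'I_n) :
  hamming (vertex_code u) (zblock n (size u)) = size u.
Proof. by rewrite zblockE -size_vertex_code hamming_nseq_false count_vertex_code. Qed.

Lemma cat_take_nth2_drop T (x0 : T) (u : seq T) a b : a < b < size u ->
  u = take a u ++ nth x0 u a :: take (b - a.+1) (drop a.+1 u) ++ nth x0 u b :: drop b.+1 u.
Proof.
case/andP=> lt_ab lt_b; rewrite -{1}(cat_take_drop a u) (drop_nth x0); last lia.
rewrite -{1}(cat_take_drop (b - a.+1) (drop a.+1 u)) drop_drop subnK //.
by rewrite (drop_nth x0 lt_b).
Qed.

Lemma hamming_vertex_code_encode n (u : seq 'I_n) x0 a b : a < b < size u ->
  hamming (vertex_code u)
    (encode n (size u) a.+1 b.+1 (val (nth x0 u a)).+1 (val (nth x0 u b)).+1)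
  = (size u).-2.
Proof.
move=> lt_abu; have /andP[lt_ab lt_bu] := lt_abu.
rewrite {1}(cat_take_nth2_drop x0 lt_abu).
set u1 := take a u; set u2 := take _ _; set u3 := drop b.+1 u.
have [sz1 sz2 sz3] : [/\ size u1 = a, size u2 = b - a.+1 & size u3 = size u - b.+1].
  by rewrite size_drop !size_takel ?size_drop //; lia.
have -> : encode n (size u) a.+1 b.+1 (val (nth x0 u a)).+1 (val (nth x0 u b)).+1 =
    zblock n (size u1) ++ Defs.number n (val (nth x0 u a)).+1 ++ zblock n (size u2)
    ++ Defs.number n (val (nth x0 u b)).+1 ++ zblock n (size u3).
  by rewrite /encode sz1 sz2 sz3 subn1 subSS -subnS.
have size_number_ord (x : 'I_n) : size (Defs.number n (val x).+1) = n.
  by rewrite size_number // ltn_ord.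
rewrite !(vertex_code_cat, vertex_code_cons).
rewrite !hamming_cat ?size_number_ord ?zblockE ?size_nseq ?size_vertex_code //.
rewrite -!zblockE !hamming_vertex_code_zblock !hamming_id; lia.
Qed.

Lemma size_choice_pairs k : size (choice_pairs k) = 'C(k, 2).
Proof.
rewrite size_allpairs_dep -bin2_sum big_nat_rev sumnE big_map.
rewrite -[1]addn0 iotaDl big_map /index_iota subn0.
by apply: eq_bigr => i _; rewrite size_iota; lia.
Qed.

Lemma mem_choice_pairs k p : p \in choice_pairs k ->
  exists a b, [/\ p = (a.+1, b.+1), a < b & b < k].
Proof.
case/allpairsPdep=> i [j [+ + ->]]; rewrite !mem_iota => /andP[i_gt0 lt_ik] /andP[lt_ij lt_jk].
by exists i.-1, j.-1; split; [rewrite !prednK //; lia | lia | lia].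
Qed.

Lemma clique_pairwise_edges n (G : rel 'I_n) E k : edge_enum G E -> has_clique G k ->
  exists u : seq 'I_n, size u = k /\ pairwise (fun x y => (x, y) \in E) u.
Proof.
case=> _ memE [K [card_K clique_K]]; exists (enum K); split; first by rewrite -cardE.
have sorted_K : sorted (fun x y : 'I_n => x < y) (enum K).
  rewrite /enum_mem -enumT sorted_filter //; first exact: ltn_trans.
  by have := iota_ltn_sorted 0 n; rewrite -val_enum_ord sorted_map.
rewrite sorted_pairwise in sorted_K; last exact: ltn_trans.
apply: (@sub_in_pairwise _ [in K]) sorted_K; last by apply/allP => x; rewrite mem_enum.
move=> x y x_K y_K lt_xy; rewrite memE lt_xy clique_K //.
by rewrite neq_ltn lt_xy.
Qed.

Lemma bin2_mul2 k : 'C(k, 2) * 2 = k * (k - 1).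
Proof.
elim: k => // k IHk; rewrite binS bin1 mulnDl IHk subn1 /=.
by case: k {IHk} => //= k; nia.
Qed.

Lemma total_cost_eq_CP_d n k : 0 < n ->
  k.-2 * 'C(k, 2) + (n * k - k) * ('C(k, 2) - (k - 1)) = CP_d n k.
Proof.
rewrite /CP_d; case: n => // n _.
case: k => [|[|k]]; try by rewrite bin_small // !(mul0n, muln0, sub0n).
have := bin2_mul2 k.+2; rewrite subSS subn0.
set c := 'C(_, _) => c2.
have [t c_eq] : exists t, c = t + k.+1 by exists (c - k.+1); lia.
rewrite c_eq addnK in c2 *; nia.
Qed.

Definition consensus n (u : seq 'I_n) : seq bool := front_tag n (size u) ++ vertex_code u.

Lemma size_consensus n (u : seq 'I_n) : size (consensus u) = CP_L n (size u).
Proof. by rewrite size_cat size_front_tag size_vertex_code /CP_L; nia. Qed.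

Lemma size_encode n k i j r s : 0 < i < j -> j <= k -> 0 < r <= n -> 0 < s <= n ->
  size (encode n k i j r s) = n * k.
Proof.
move=> /andP[i_gt0 lt_ij] le_jk r_in s_in.
rewrite /encode !zblockE /Defs.number !size_cat /= !size_nseq; nia.
Qed.

Lemma size_block n k i j (e : 'I_n * 'I_n) : 0 < i < j -> j <= k ->
  size (block k i j e) = CP_L n k.
Proof.
move=> lt_ij le_jk; rewrite size_cat size_front_tag size_encode ?ltn_ord // /CP_L.
nia.
Qed.

Lemma near_window_template n (u : seq 'I_n) :
  near_window (consensus u) (template_string n (size u)) (n * size u - size u).
Proof.
have size_template : size (template_string n (size u)) = size (consensus u).
  by rewrite size_cat size_nseq size_front_tag size_consensus /CP_L; nia.
apply: (near_window_at (p := 0)); rewrite ?size_template // drop0 -size_template take_size.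
rewrite hamming_cat // hamming_id mulnC -size_vertex_code hamming_nseq_true.
by rewrite count_vertex_code size_vertex_code.
Qed.

Lemma near_window_choice_string n (E : seq ('I_n * 'I_n)) (u : seq 'I_n) p :
  pairwise (fun x y => (x, y) \in E) u -> p \in choice_pairs (size u) ->
  near_window (consensus u) (choice_string (size u) p.1 p.2 E) (size u).-2.
Proof.
move=> u_edges /mem_choice_pairs[a [b [-> lt_ab lt_bu]]] /=.
have x0 : 'I_n by move: lt_bu; case: (u) => // x _ _; exact: x.
have e_in : (nth x0 u a, nth x0 u b) \in E.
  by move/(pairwiseP x0): u_edges; apply; rewrite ?inE // (ltn_trans lt_ab).
apply: (near_window_flatten (b := block (size u) a.+1 b.+1 (nth x0 u a, nth x0 u b))).
- by apply/allP => _ /mapP[e _ ->]; rewrite size_block ?size_consensus.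
- exact: map_f.
rewrite /block /consensus hamming_cat // hamming_id add0n.
by rewrite hamming_vertex_code_encode ?lt_ab.
Qed.

Theorem proposition5 (n k : nat) (G : rel 'I_n) (E : seq ('I_n * 'I_n)) :
  symmetric G -> irreflexive G -> 3 <= k -> edge_enum G E ->
  has_clique G k ->
  CP_solvable (CP_instance k E) (CP_L n k) (CP_d n k).
Proof.
move=> _ _ k_ge3 E_enum G_clique.
have [u [size_u u_edges]] := clique_pairwise_edges E_enum G_clique; subst k.
have n_gt0 : 0 < n.
  by move: k_ge3; case: (u) => // x _ _; exact: leq_trans (ltn0Sn x) (ltn_ord x).
pose choice_costs := [seq (choice_string (size u) p.1 p.2 E, (size u).-2)
  | p <- choice_pairs (size u)].
pose template_costs := nseq ('C(size u, 2) - (size u - 1))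
  (template_string n (size u), n * size u - size u).
have -> : CP_instance (size u) E = map fst (choice_costs ++ template_costs).
  by rewrite map_cat -map_comp map_nseq.
rewrite -size_consensus; apply: CP_solvable_near.
  rewrite all_cat all_map all_nseq near_window_template orbT andbT.
  by apply/allP => p; apply: near_window_choice_string.
rewrite map_cat sumn_cat -map_comp map_nseq sumn_nseq sumnE big_map big_const_seq.
by rewrite count_predT iter_addn_0 size_choice_pairs /= total_cost_eq_CP_d.
Qed.
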